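(* Let $M$ be a finite abelian group of order $m$, $J$ a Jacobi function on $M$, $c\in\hat{M}$ with $c^2=1$, and $i\colon\hat{M}\setminus\{c\}\to\hat{M}\setminus\{1\}$ a bijection with $i(x)=x\,i(x^{-1})$ for all $x\ne c$, such that $J(\alpha,\beta)=\frac{1}{m}\sum_{x\in\hat{M}\setminus\{c\}}\alpha(i(x))\beta(i(x)x^{-1})$ for all $\alpha,\beta\in M$. Let $F=\hat{M}\sqcup\{0\}$ with the operation $\oplus$ for which $0$ is the identity and, for $x,y\ne0$, $x\oplus y=0$ if $x=cy$ and $x\oplus y=x\,i(x/y)^{-1}$ otherwise. Then $\oplus$ is associative on $F$.
   Context: $\hat{M}$ is the Pontryagin dual of $M$, written multiplicatively with identity $1$; for $\alpha\in M$, $x\in\hat{M}$, $\alpha(x)$ is the value of the character $x$ at $\alpha$. $\delta(\alpha)=1$ if $\alpha$ is the identity of $M$ and $0$ otherwise. A Jacobi function on $M$ is a function $J\colon M\times M\to\mathbf{C}$ satisfying: (A) $J(\alpha,\beta)=J(\beta,\alpha)$; (B) with $J^*(\alpha,\beta)=-\delta(\alpha)-\delta(\beta)+J(\alpha,\beta)$, $J^*(\alpha,\beta)J^*(\alpha\beta,\gamma)=J^*(\alpha,\beta\gamma)J^*(\beta,\gamma)$; (C) $\sum_{\beta\in M}J(\alpha_1\beta,\alpha_2\beta^{-1})J(\alpha_3\beta,\alpha_4\beta^{-1})=J(\alpha_1\alpha_4,\alpha_2\alpha_3)$; all for all elements of $M$. *)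

From HB Require Import structures.
From mathcomp Require Import all_boot all_order all_algebra all_fingroup all_solvable all_field.
Set Implicit Arguments. Unset Strict Implicit. Unset Printing Implicit Defensive.
Import Order.TTheory GRing.Theory Num.Theory.
Local Open Scope ring_scope.

(* Values are taken in algC (character values of a finite group are roots
   of unity, hence algebraic). *)
Definition char_axiom (gT : finGroupType) (f : {ffun gT -> algC}) : bool :=
  (f 1%g == 1) && [forall a : gT, [forall b : gT, f (a * b)%g == f a * f b]].

Record dual (gT : finGroupType) := Dual {
  dfun :> {ffun gT -> algC};
  _ : char_axiom dfun }.

HB.instance Definition _ (gT : finGroupType) := [isSub for @dfun gT].
HB.instance Definition _ (gT : finGroupType) := [Equality of dual gT by <:].
HB.instance Definition _ (gT : finGroupType) := [Choice of dual gT by <:].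
HB.instance Definition _ (gT : finGroupType) := [Countable of dual gT by <:].

(* Finiteness of the dual: every character takes values in the #|gT|-th
   roots of unity, which are powers of a fixed primitive root. *)
Section DualFinite.
Variable gT : finGroupType.

Lemma dual_card_gt0 : (0 < #|gT|)%N.
Proof. by rewrite -cardsT (cardG_gt0 [set: gT]). Qed.

Definition dual_z : algC := sval (C_prim_root_exists dual_card_gt0).
Lemma dual_zP : #|gT|.-primitive_root dual_z.
Proof. exact: svalP (C_prim_root_exists dual_card_gt0). Qed.

Lemma dual_pow (x : dual gT) (a : gT) : x a ^+ #|gT| = 1.
Proof.
case: x => f /= /andP[/eqP f1 /forallP fM].
have fX k : f (a ^+ k)%g = f a ^+ k.
  elim: k => [|k IH]; first by rewrite expg0 expr0.
  by rewrite expgS exprS (eqP (forallP (fM a) _)) IH.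
by rewrite -fX -cardsT expg_cardG ?inE.
Qed.

Definition dual_encode (x : dual gT) : {ffun gT -> 'I_#|gT|} :=
  [ffun a => sval (prim_rootP dual_zP (dual_pow x a))].
Definition dual_decode (g : {ffun gT -> 'I_#|gT|}) : option (dual gT) :=
  insub [ffun a => dual_z ^+ g a].

Lemma dual_encodeK : pcancel dual_encode dual_decode.
Proof.
move=> x; rewrite /dual_decode.
suff -> : [ffun a => dual_z ^+ dual_encode x a] = val x by rewrite valK.
apply/ffunP => a; rewrite !ffunE.
by case: prim_rootP => i /= ->.
Qed.

HB.instance Definition _ := isFinite.Build (dual gT) (pcan_enumP dual_encodeK).
End DualFinite.

Section DualOps.
Variable gT : finGroupType.
Implicit Types x y : dual gT.

Lemma dual1 x : x 1%g = 1.
Proof. by case: x => f /= /andP[/eqP]. Qed.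

Lemma dualM x (a b : gT) : x (a * b)%g = x a * x b.
Proof. by case: x => f /= /andP[_ /forallP /(_ a) /forallP /(_ b) /eqP]. Qed.

Lemma dual_one_ax : char_axiom [ffun _ : gT => (1 : algC)].
Proof. by apply/andP; split; [rewrite ffunE | apply/forallP=> a; apply/forallP=> b; rewrite !ffunE mulr1]. Qed.

Definition dual_one : dual gT := Dual dual_one_ax.

Lemma dual_mul_ax x y : char_axiom [ffun a => x a * y a].
Proof.
apply/andP; split; first by rewrite ffunE !dual1 mulr1.
by apply/forallP=> a; apply/forallP=> b; rewrite !ffunE !dualM mulrACA.
Qed.

Definition dmul x y : dual gT := Dual (dual_mul_ax x y).

Lemma dual_inv_ax x : char_axiom [ffun a => (x a)^-1].
Proof.
apply/andP; split; first by rewrite ffunE dual1 invr1.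
by apply/forallP=> a; apply/forallP=> b; rewrite !ffunE dualM invfM.
Qed.

Definition dinv x : dual gT := Dual (dual_inv_ax x).

Definition kdelta (a : gT) : algC := (a == 1%g)%:R.

End DualOps.

Definition Jstar (gT : finGroupType) (J : gT -> gT -> algC) (a b : gT) : algC :=
  - kdelta a - kdelta b + J a b.

Definition jacobi_function (gT : finGroupType) (J : gT -> gT -> algC) : Prop :=
  [/\ (forall a b, J a b = J b a),
      (forall a b g, Jstar J a b * Jstar J (a * b)%g g = Jstar J a (b * g)%g * Jstar J b g)
    & (forall a1 a2 a3 a4,
        \sum_(b : gT) J (a1 * b)%g (a2 * b^-1)%g * J (a3 * b)%g (a4 * b^-1)%g
        = J (a1 * a4)%g (a2 * a3)%g)].

(* F = \hat M ⊔ {0}, with 0 encoded as None. *)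
Definition oplus (gT : finGroupType) (c : dual gT) (i : dual gT -> dual gT)
    (u v : option (dual gT)) : option (dual gT) :=
  match u, v with
  | None, _ => v
  | _, None => u
  | Some x, Some y =>
      if x == dmul c y then None
      else Some (dmul x (dinv (i (dmul x (dinv y)))))
  end.

From HB Require Import structures.
From mathcomp Require Import all_boot all_order all_algebra all_fingroup all_solvable all_field.
From mathcomp Require Import ring.
Import GRing.Theory Num.Theory.

Set Implicit Arguments.
Unset Strict Implicit.
Unset Printing Implicit Defensive.

Local Open Scope ring_scope.

(** Put L(a,b,g) = J(a,b) J(ab,g) - δ(ab) J(a,b) + δ(a) δ(b) ([Jassoc]).
    Axiom (B), the symmetry of J and the commutativity of M give
    L(a,b,g) = L(g,b,a). Expanding J in characters, the Fourier transform of L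
    at (x,y,z) is
    m [(x ⊕ y) ⊕ z = 1]: the character sums count the x ≠ c with i(x) s = a
    and i(x) x^-1 s = b, whose only candidate x = a/b is a solution exactly
    when a ⊕ b = s. Hence (x ⊕ y) ⊕ z = 1 iff (z ⊕ y) ⊕ x = 1; since ⊕
    commutes with translations of M^, (x ⊕ y) ⊕ z = (z ⊕ y) ⊕ x, which together
    with the commutativity of ⊕ is associativity. *)

Section Characters.
Variable gT : finGroupType.
Implicit Types (x y z : dual gT) (a b : gT).
Local Notation m := (#|gT|%:R : algC).

Lemma dmulE x y a : dmul x y a = x a * y a.
Proof. by rewrite ffunE. Qed.

Lemma dinvE x a : dinv x a = (x a)^-1.
Proof. by rewrite ffunE. Qed.

Lemma dual_oneE a : dual_one gT a = 1.
Proof. by rewrite ffunE. Qed.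

Lemma eq_dual x y : x =1 y -> x = y.
Proof. by move=> xy; apply/val_inj/ffunP. Qed.

Lemma dual_neq0 x a : x a != 0.
Proof.
apply/eqP => xa0; have := dualM x a a^-1.
by rewrite mulgV dual1 xa0 mul0r => /eqP; rewrite oner_eq0.
Qed.

Lemma dual_invg x a : x a^-1%g = (x a)^-1.
Proof. by apply: (mulfI (dual_neq0 x a)); rewrite -dualM mulgV dual1 mulfV ?dual_neq0. Qed.

Lemma natr_card_neq0 : m != 0.
Proof. by rewrite pnatr_eq0 -lt0n dual_card_gt0. Qed.

End Characters.

Ltac dual_field :=
  apply: eq_dual => ?; rewrite ?(dmulE, dinvE, dual_oneE); field; rewrite ?dual_neq0.

Section CharacterGroup.
Variable gT : finGroupType.
Implicit Types (x y z : dual gT) (a b : gT).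
Local Notation m := (#|gT|%:R : algC).

Lemma dmulC : commutative (@dmul gT).
Proof. by move=> x y; dual_field. Qed.

Lemma dmulr1 x : dmul x (dual_one gT) = x.
Proof. by dual_field. Qed.

Lemma dmulI x : injective (dmul x).
Proof.
move=> y z /(congr1 (dmul (dinv x))) yz; apply: eq_dual => a.
by have := congr1 (fun t : dual gT => t a) yz; rewrite !dmulE dinvE !mulrA mulVf ?dual_neq0 ?mul1r.
Qed.

Lemma dmul_dinv_eq1 x y : (dmul x (dinv y) == dual_one gT) = (x == y).
Proof.
apply/eqP/eqP => [xy1|->]; last by dual_field.
transitivity (dmul (dmul x (dinv y)) y); first by dual_field.
by rewrite xy1; dual_field.
Qed.

Lemma dmul_eq x y z : (dmul x y == z) = (x == dmul z (dinv y)).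
Proof. by rewrite -dmul_dinv_eq1 -[x == _]dmul_dinv_eq1; congr (_ == _); dual_field. Qed.

Lemma sum_dual x : \sum_a x a = (x == dual_one gT)%:R * m.
Proof.
have [->|nx1] := eqVneq x (dual_one gT).
  by rewrite mul1r (eq_bigr (fun _ => 1)) ?sumr_const // => a _; rewrite dual_oneE.
have [b xb1] : exists b, x b != 1.
  apply/existsP; rewrite -negb_forall; apply: contra nx1 => /forallP x1.
  by apply/eqP/eq_dual => a; rewrite dual_oneE; apply/eqP/x1.
have : \sum_a x a = x b * \sum_a x a.
  rewrite big_distrr /= (reindex_inj (mulgI b)) /=.
  by apply: eq_bigr => a _; rewrite dualM.
move/eqP; rewrite -subr_eq0 -{1}(mul1r (\sum_a x a)) -mulrBl mulf_eq0 subr_eq0.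
by rewrite eq_sym (negbTE xb1) mul0r => /eqP.
Qed.

Lemma dual_orthogonality x y : \sum_a x a * (y a)^-1 = (x == y)%:R * m.
Proof.
rewrite -dmul_dinv_eq1 -sum_dual.
by apply: eq_bigr => a _; rewrite dmulE dinvE.
Qed.

End CharacterGroup.

Arguments dmulI {gT} x [x1 x2].

Section KroneckerDelta.
Variable gT : finGroupType.
Implicit Types a b : gT.

Lemma sum_kdelta (F : gT -> algC) : \sum_a kdelta a * F a = F 1%g.
Proof.
rewrite (bigD1 1%g) //= big1 ?addr0 /kdelta ?eqxx ?mul1r // => a /negbTE ->.
by rewrite mul0r.
Qed.

Lemma sum_kdeltaM a (F : gT -> algC) : \sum_b kdelta (a * b)%g * F b = F a^-1%g.
Proof.
rewrite (reindex_inj (mulgI a^-1%g)) /=.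
under eq_bigr do rewrite mulKVg.
by rewrite (sum_kdelta (fun b => F (a^-1 * b)%g)) mulg1.
Qed.

End KroneckerDelta.

Section Fourier3.
Variable gT : finGroupType.
Implicit Types (x y z : dual gT) (f h : gT -> gT -> gT -> algC).
Local Notation m := (#|gT|%:R : algC).

Definition fourier3 f x y z : algC :=
  \sum_a \sum_b \sum_g f a b g * (x a)^-1 * (y b)^-1 * (z g)^-1.

Lemma eq_fourier3 f h x y z :
  (forall a b g, f a b g = h a b g) -> fourier3 f x y z = fourier3 h x y z.
Proof. by move=> fh; do 3!apply: eq_bigr => ? _; rewrite fh. Qed.

Lemma fourier3D f h x y z :
  fourier3 (fun a b g => f a b g + h a b g) x y z = fourier3 f x y z + fourier3 h x y z.
Proof.
rewrite /fourier3 -big_split; apply: eq_bigr => a _; rewrite -big_split; apply: eq_bigr => b _.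
by rewrite -big_split; apply: eq_bigr => g _; rewrite !mulrDl.
Qed.

Lemma fourier3N f x y z :
  fourier3 (fun a b g => - f a b g) x y z = - fourier3 f x y z.
Proof.
rewrite /fourier3 -sumrN; apply: eq_bigr => a _; rewrite -sumrN; apply: eq_bigr => b _.
by rewrite -sumrN; apply: eq_bigr => g _; rewrite !mulNr.
Qed.

Lemma fourier3Z k f x y z :
  fourier3 (fun a b g => k * f a b g) x y z = k * fourier3 f x y z.
Proof.
rewrite /fourier3 mulr_sumr; apply: eq_bigr => a _; rewrite mulr_sumr; apply: eq_bigr => b _.
by rewrite mulr_sumr; apply: eq_bigr => g _; rewrite !mulrA.
Qed.

Lemma fourier3_sum (I : finType) (P : pred I) (F : I -> gT -> gT -> gT -> algC) x y z :
  fourier3 (fun a b g => \sum_(t | P t) F t a b g) x y z =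
  \sum_(t | P t) fourier3 (F t) x y z.
Proof.
rewrite /fourier3; symmetry.
rewrite exchange_big; apply: eq_bigr => a _; rewrite exchange_big; apply: eq_bigr => b _.
by rewrite exchange_big; apply: eq_bigr => g _; rewrite -!mulr_suml.
Qed.

Lemma fourier3_char x y z x0 y0 z0 :
  fourier3 (fun a b g => x a * y b * z g) x0 y0 z0 =
  ((x == x0) && (y == y0) && (z == z0))%:R * m ^+ 3.
Proof.
transitivity ((\sum_a x a * (x0 a)^-1) * (\sum_b y b * (y0 b)^-1) *
              (\sum_g z g * (z0 g)^-1)).
  rewrite big_distrlr big_distrl; apply: eq_bigr => a _.
  rewrite big_distrl; apply: eq_bigr => b _.
  by rewrite big_distrr; apply: eq_bigr => g _ /=; ring.
by rewrite !dual_orthogonality -!mulnb !natrM; ring.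
Qed.

Lemma fourier3_const_r (f : gT -> gT -> algC) x y z :
  fourier3 (fun a b _ => f a b) x y z =
  (\sum_a \sum_b f a b * (x a)^-1 * (y b)^-1) * ((z == dual_one gT)%:R * m).
Proof.
rewrite eq_sym -dual_orthogonality big_distrl; apply: eq_bigr => a _.
rewrite big_distrl; apply: eq_bigr => b _; rewrite big_distrr.
by apply: eq_bigr => g _ /=; rewrite dual_oneE mul1r.
Qed.

Lemma fourier3_sym13 f x y z :
  (forall a b g, f a b g = f g b a) -> fourier3 f x y z = fourier3 f z y x.
Proof.
move=> fsym; rewrite /fourier3.
under eq_bigr => a _ do rewrite exchange_big.
rewrite exchange_big; apply: eq_bigr => g _; rewrite exchange_big.
by do 2!apply: eq_bigr => ? _; rewrite fsym; ring.
Qed.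

End Fourier3.

Section JacobiAssociator.
Variables (gT : finGroupType) (J : gT -> gT -> algC).
Implicit Types a b g : gT.

Definition Jassoc a b g : algC :=
  J a b * J (a * b)%g g - kdelta (a * b)%g * J a b + kdelta a * kdelta b.

(* The correction term is symmetric in [a] and [g] as soon as [J] is symmetric. *)
Lemma Jassoc_JstarE a b g :
  Jassoc a b g = Jstar J a b * Jstar J (a * b)%g g -
    (kdelta a * kdelta b + kdelta a * kdelta g + kdelta b * kdelta g
     - kdelta a * J b g - kdelta b * J a g - kdelta g * J a b).
Proof.
rewrite /Jassoc /Jstar /kdelta.
have [->|a1] := eqVneq a 1%g; have [->|b1] := eqVneq b 1%g;
  by rewrite ?mul1g ?mulg1 ?eqxx ?(negbTE a1) ?(negbTE b1) /=; ring.
Qed.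

Hypotheses (M_abelian : abelian [set: gT]) (Jsym : forall a b, J a b = J b a)
  (Jcocycle : forall a b g,
     Jstar J a b * Jstar J (a * b)%g g = Jstar J a (b * g)%g * Jstar J b g).

Lemma JstarC a b : Jstar J a b = Jstar J b a.
Proof. by rewrite /Jstar Jsym (addrC (- kdelta a)). Qed.

Lemma Jassoc_sym a b g : Jassoc a b g = Jassoc g b a.
Proof.
have bgC : (b * g = g * b)%g by apply: (centsP M_abelian); rewrite inE.
rewrite !Jassoc_JstarE Jcocycle bgC mulrC (JstarC g b) (JstarC a).
by rewrite (Jsym g b) (Jsym g a) (Jsym b a); congr (_ - _); ring.
Qed.

End JacobiAssociator.

Lemma eq_option_Some (T : eqType) (u v : option T) :
  (forall w, (u == Some w) = (v == Some w)) -> u = v.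
Proof.
case: u => [x|] uv; first by apply/esym/eqP; rewrite -uv.
by case: v uv => // y /(_ y); rewrite eqxx.
Qed.

Lemma sum_pred1_natr (T : finType) (P : pred T) (w : T) :
  \sum_(x | P x) ((x == w)%:R : algC) = (P w)%:R.
Proof.
case Pw: (P w); first by rewrite (bigD1 w) //= eqxx big1 ?addr0 // => x /andP[_ /negbTE ->].
by rewrite big1 // => x Px; case: eqP Px => // ->; rewrite Pw.
Qed.

Section Oplus.
Variables (gT : finGroupType) (c : dual gT) (i : dual gT -> dual gT).
Implicit Types (x y z s w a b : dual gT) (u v t : option (dual gT)).
Local Notation "u ⊕ v" := (oplus c i u v) (at level 50, left associativity).

Lemma oplus_noner u : u ⊕ None = u.
Proof. by case: u. Qed.

Lemma oplus_SomeE a b :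
  Some a ⊕ Some b = if dmul a (dinv b) == c then None
                    else Some (dmul a (dinv (i (dmul a (dinv b))))).
Proof.
rewrite /= -(inj_eq (dmulI (dinv b))) (dmulC _ a) (dmulC _ (dmul c b)).
by congr (if _ == _ then _ else _); dual_field.
Qed.

Lemma oplus_scale s u v :
  omap (dmul s) u ⊕ omap (dmul s) v = omap (dmul s) (u ⊕ v).
Proof.
case: u v => [x|] [y|] //; rewrite !oplus_SomeE.
have -> : dmul (dmul s x) (dinv (dmul s y)) = dmul x (dinv y) by dual_field.
by case: ifP => //= _; congr Some; dual_field.
Qed.

Lemma count_oplus a b s :
  \sum_(x | x != c) ((dmul (i x) s == a) && (dmul (dmul (i x) (dinv x)) s == b))%:R
  = (Some a ⊕ Some b == Some s)%:R :> algC.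
Proof.
set w := dmul a (dinv b).
have solE x : (dmul (i x) s == a) && (dmul (dmul (i x) (dinv x)) s == b) =
              (x == w) && (dmul a (dinv (i w)) == s).
  apply/andP/andP => [[/eqP ea /eqP eb]|[/eqP -> /eqP <-]].
    have xw : x = w by rewrite /w -ea -eb; dual_field.
    by rewrite -xw -ea; split; apply/eqP; dual_field.
  by rewrite /w; split; apply/eqP; dual_field.
under eq_bigr do rewrite solE -mulnb natrM.
rewrite -big_distrl sum_pred1_natr oplus_SomeE -/w.
by case: ifP => //= _; rewrite ?mul0r ?mul1r.
Qed.

Lemma count_oplus_defined x0 y0 :
  \sum_(x | x != c) (dmul x y0 == x0)%:R = (Some x0 ⊕ Some y0 != None)%:R :> algC.
Proof.
under eq_bigr do rewrite dmul_eq.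
by rewrite sum_pred1_natr oplus_SomeE; case: ifP.
Qed.

Lemma count_oplus_oplus x0 y0 z0 :
  \sum_(x | x != c) \sum_(y | y != c)
    ((dmul (i x) (i y) == x0) && (dmul (dmul (i x) (dinv x)) (i y) == y0)
     && (dmul (i y) (dinv y) == z0))%:R
  = (if Some x0 ⊕ Some y0 is Some s then (Some s ⊕ Some z0 == Some (dual_one gT))%:R
     else 0) :> algC.
Proof.
rewrite exchange_big.
under eq_bigr do under eq_bigr do rewrite -mulnb natrM.
under eq_bigr do rewrite -big_distrl count_oplus.
case: (Some x0 ⊕ Some y0) => [s|]; last by rewrite big1 // => y _ /=; rewrite mul0r.
rewrite -count_oplus; apply: eq_bigr => y _.
by rewrite -mulnb natrM !dmulr1 (inj_eq Some_inj) eq_sym.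
Qed.

Lemma oplus_eq_translate u v t w :
  (u ⊕ v ⊕ t == Some w) =
  (omap (dmul (dinv w)) u ⊕ omap (dmul (dinv w)) v ⊕ omap (dmul (dinv w)) t
   == Some (dual_one gT)).
Proof.
rewrite !oplus_scale; case: (u ⊕ v ⊕ t) => //= s.
by rewrite !(inj_eq Some_inj) dmulC dmul_dinv_eq1.
Qed.

Lemma oplus_swap13_of_one :
  (forall x y z, (Some x ⊕ Some y ⊕ Some z == Some (dual_one gT)) =
                 (Some z ⊕ Some y ⊕ Some x == Some (dual_one gT))) ->
  forall x y z, Some x ⊕ Some y ⊕ Some z = Some z ⊕ Some y ⊕ Some x.
Proof.
move=> swap1 x y z; apply: eq_option_Some => w.
rewrite (oplus_eq_translate (Some x)) (oplus_eq_translate (Some z)).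
exact: swap1.
Qed.

Hypotheses (c2 : dmul c c = dual_one gT)
  (i_dinv : forall x, x != c -> i x = dmul x (i (dinv x))).

Lemma oplusC : commutative (oplus c i).
Proof.
have cc (g : gT) : c g * c g = 1 by rewrite -dmulE c2 dual_oneE.
case=> [x|] [y|] //=.
have -> : (x == dmul c y) = (y == dmul c x).
  by apply/eqP/eqP => ->; apply: eq_dual => g; rewrite !dmulE mulrA cc mul1r.
case: ifP => // /negbT yxc; congr Some.
set w := dmul y (dinv x).
have wc : w != c.
  by apply: contra yxc => /eqP <-; apply/eqP; dual_field.
have -> : dmul x (dinv y) = dinv w by dual_field.
by rewrite (i_dinv wc); dual_field.
Qed.

Lemma oplusA_of_swap13_one :
  (forall x y z, (Some x ⊕ Some y ⊕ Some z == Some (dual_one gT)) =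
                 (Some z ⊕ Some y ⊕ Some x == Some (dual_one gT))) ->
  associative (oplus c i).
Proof.
move=> swap1; case=> [x|] [y|] [z|] //=; rewrite ?oplus_noner //.
by rewrite (oplus_swap13_of_one swap1) oplusC (oplusC (Some z)).
Qed.

End Oplus.

Section FourierJassoc.
Variables (gT : finGroupType) (c : dual gT) (i : dual gT -> dual gT)
  (J : gT -> gT -> algC).
Implicit Types (x y z : dual gT) (a b g : gT).
Local Notation m := (#|gT|%:R : algC).
Local Notation "u ⊕ v" := (oplus c i u v) (at level 50, left associativity).

Hypothesis J_char : forall a b,
  J a b = m^-1 * \sum_(x | x != c) i x a * dmul (i x) (dinv x) b.

Lemma J_antidiag a : J a a^-1 = m^-1 * \sum_(x | x != c) x a.
Proof.
rewrite J_char; congr (_ * _); apply: eq_bigr => x _.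
by rewrite dmulE dinvE !dual_invg invrK; field; rewrite dual_neq0.
Qed.

Lemma JJ_char a b g :
  J a b * J (a * b)%g g = m^-1 * m^-1 *
    \sum_(x | x != c) \sum_(y | y != c)
      dmul (i x) (i y) a * dmul (dmul (i x) (dinv x)) (i y) b * dmul (i y) (dinv y) g.
Proof.
rewrite !J_char mulrACA big_distrlr; congr (_ * _).
by do 2!apply: eq_bigr => ? _; rewrite dualM !(dmulE, dinvE) /=; ring.
Qed.

Lemma fourier3_JJ x0 y0 z0 :
  fourier3 (fun a b g => J a b * J (a * b)%g g) x0 y0 z0 =
  m * (if Some x0 ⊕ Some y0 is Some s
       then (Some s ⊕ Some z0 == Some (dual_one gT))%:R else 0).
Proof.
rewrite (eq_fourier3 _ _ _ JJ_char) fourier3Z fourier3_sum -count_oplus_oplus.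
under eq_bigr do rewrite fourier3_sum; under eq_bigr do under eq_bigr do rewrite fourier3_char.
under eq_bigr do rewrite -big_distrl; rewrite -big_distrl /=.
by field; exact: natr_card_neq0.
Qed.

Lemma sum_deltaJ x0 y0 :
  \sum_a \sum_b kdelta (a * b)%g * J a b * (x0 a)^-1 * (y0 b)^-1 =
  (Some x0 ⊕ Some y0 != None)%:R.
Proof.
rewrite -count_oplus_defined.
transitivity (\sum_(x | x != c) m^-1 * \sum_a dmul x y0 a * (x0 a)^-1).
  under eq_bigr do under eq_bigr do rewrite -!mulrA.
  under eq_bigr do rewrite sum_kdeltaM J_antidiag dual_invg invrK -mulrA mulr_suml mulr_sumr.
  rewrite exchange_big; apply: eq_bigr => x _; rewrite mulr_sumr.
  by apply: eq_bigr => a _; rewrite dmulE; ring.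
by apply: eq_bigr => x _; rewrite dual_orthogonality; field; exact: natr_card_neq0.
Qed.

Lemma fourier3_deltaJ x0 y0 z0 :
  fourier3 (fun a b _ => kdelta (a * b)%g * J a b) x0 y0 z0 =
  m * ((Some x0 ⊕ Some y0 != None) && (z0 == dual_one gT))%:R.
Proof. by rewrite fourier3_const_r sum_deltaJ -mulnb natrM; ring. Qed.

Lemma fourier3_delta2 x0 y0 z0 :
  fourier3 (fun a b _ => kdelta a * kdelta b) x0 y0 z0 = m * (z0 == dual_one gT)%:R.
Proof.
rewrite fourier3_const_r.
under eq_bigr do under eq_bigr do rewrite -!mulrA mulrCA.
under eq_bigr do rewrite sum_kdelta dual1 invr1 mulr1.
by rewrite sum_kdelta dual1 invr1 mul1r mulrC.
Qed.

Lemma fourier3_Jassoc x y z :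
  fourier3 (Jassoc J) x y z = m * (Some x ⊕ Some y ⊕ Some z == Some (dual_one gT))%:R.
Proof.
rewrite 2!fourier3D fourier3N fourier3_JJ fourier3_deltaJ fourier3_delta2.
case: (Some x ⊕ Some y) => [s|] /=; first ring.
by rewrite (inj_eq Some_inj); ring.
Qed.

End FourierJassoc.

Theorem mainTheorem12 (gT : finGroupType) (M_abelian : abelian [set: gT])
    (J : gT -> gT -> algC) (c : dual gT) (i : dual gT -> dual gT) :
  jacobi_function J ->
  dmul c c = dual_one gT ->
  (* i maps \hat M \ {c} into \hat M \ {1} ... *)
  (forall x, x != c -> i x != dual_one gT) ->
  (* ... injectively ... *)
  (forall x y, x != c -> y != c -> i x = i y -> x = y) ->
  (* ... and onto \hat M \ {1} *)
  (forall y, y != dual_one gT -> exists2 x, x != c & i x = y) ->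
  (forall x, x != c -> i x = dmul x (i (dinv x))) ->
  (forall a b : gT,
     J a b = (#|gT|%:R)^-1 *
             \sum_(x : dual gT | x != c) i x a * dmul (i x) (dinv x) b) ->
  forall u v w : option (dual gT),
    oplus c i (oplus c i u v) w = oplus c i u (oplus c i v w).
Proof.
case=> Jsym Jcocycle _ c2 _ _ _ i_dinv J_char.
suff oplusA : associative (oplus c i) by move=> u v w; rewrite oplusA.
apply: (oplusA_of_swap13_one c2 i_dinv) => x y z.
have := fourier3_sym13 x y z (Jassoc_sym M_abelian Jsym Jcocycle).
rewrite !(fourier3_Jassoc J_char) => /(mulfI (natr_card_neq0 gT)) /eqP.
by rewrite eqr_nat => /eqP; do 2!case: (_ == Some _).
Qed.
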